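(* Let $\mathcal{T}$ be a K3 category and $E\in\mathcal{T}$ a spherical object. Define objects $E_n$ inductively by $E_1:=E$ and, given $E_n$, letting $E_{n+1}$ be defined by a distinguished triangle $E_{n+1}\to E\to E_n[2]\to E_{n+1}[1]$ whose middle map is a nonzero morphism $E\to E_n[2]$. Then $\mathrm{Hom}(E,E_n[2])$ is one-dimensional for every $n\ge1$ (so the construction is well defined up to isomorphism), and for all positive integers $m\le n$ one has $(E_m,E_n)^i=1$ if $i\in\{-n+1,\dots,-n+m\}$, $(E_m,E_n)^i=1$ if $i\in\{2,\dots,m+1\}$, and $(E_m,E_n)^i=0$ otherwise.
   Context: All categories are linear over a field $k$ of characteristic $\neq 2$ and of finite type. A K3 category is such a triangulated category in which $E\mapsto E[2]$ is a Serre functor ($\mathrm{Hom}(E,F)\cong\mathrm{Hom}(F,E[2])^*$ functorially). Write $(E,F)^i=\dim_k\mathrm{Hom}(E,F[i])$. An object $E$ is spherical if $(E,E)^0=(E,E)^2=1$ and $(E,E)^i=0$ for $i\neq0,2$. *)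

(* an axiomatic k-linear triangulated category with Serre
   functor [2] ("K3 category"), with Mor spaces finite-dimensional k-vector
   spaces (vectType k). *)
From HB Require Import structures.
From mathcomp Require Import all_boot all_order all_algebra.
Set Implicit Arguments. Unset Strict Implicit. Unset Printing Implicit Defensive.
Import GRing.Theory.
Local Open Scope ring_scope.

Record K3Cat (k : fieldType) := {
  Obj :> Type;
  Mor : Obj -> Obj -> vectType k;
  comp : forall X Y Z : Obj, Mor Y Z -> Mor X Y -> Mor X Z;
  idm : forall X : Obj, Mor X X;
  comp_linl : forall X Y Z (g g' : Mor Y Z) (f : Mor X Y) (a : k),
      comp (a *: g + g') f = a *: comp g f + comp g' f;
  comp_linr : forall X Y Z (g : Mor Y Z) (f f' : Mor X Y) (a : k),
      comp g (a *: f + f') = a *: comp g f + comp g f';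
  compA : forall X Y Z W (h : Mor Z W) (g : Mor Y Z) (f : Mor X Y),
      comp h (comp g f) = comp (comp h g) f;
  comp1m : forall X Y (f : Mor X Y), comp (idm Y) f = f;
  compm1 : forall X Y (f : Mor X Y), comp f (idm X) = f;
  zobj : Obj;
  zobj_from : forall X, \dim (fullv : {vspace Mor zobj X}) = 0%N;
  zobj_to : forall X, \dim (fullv : {vspace Mor X zobj}) = 0%N;
  bip : Obj -> Obj -> Obj;
  bip_i1 : forall X Y, Mor X (bip X Y);
  bip_i2 : forall X Y, Mor Y (bip X Y);
  bip_p1 : forall X Y, Mor (bip X Y) X;
  bip_p2 : forall X Y, Mor (bip X Y) Y;
  bip_11 : forall X Y, comp (bip_p1 X Y) (bip_i1 X Y) = idm X;
  bip_22 : forall X Y, comp (bip_p2 X Y) (bip_i2 X Y) = idm Y;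
  bip_12 : forall X Y, comp (bip_p1 X Y) (bip_i2 X Y) = 0;
  bip_21 : forall X Y, comp (bip_p2 X Y) (bip_i1 X Y) = 0;
  bip_id : forall X Y, comp (bip_i1 X Y) (bip_p1 X Y)
                       + comp (bip_i2 X Y) (bip_p2 X Y) = idm (bip X Y);
  sh : Obj -> Obj;
  shm : forall X Y, Mor X Y -> Mor (sh X) (sh Y);
  shm_lin : forall X Y (f f' : Mor X Y) (a : k), shm (a *: f + f') = a *: shm f + shm f';
  shm_comp : forall X Y Z (g : Mor Y Z) (f : Mor X Y), shm (comp g f) = comp (shm g) (shm f);
  shm_id : forall X, shm (idm X) = idm (sh X);
  shm_inj : forall X Y, injective (@shm X Y);
  shm_surj : forall X Y (g : Mor (sh X) (sh Y)), exists f, shm f = g;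
  sh_esurj : forall Y, exists X (u : Mor (sh X) Y) (v : Mor Y (sh X)),
      comp u v = idm Y /\ comp v u = idm (sh X);
  dist : forall X Y Z, Mor X Y -> Mor Y Z -> Mor Z (sh X) -> Prop;
  dist_iso : forall X Y Z X' Y' Z' (f : Mor X Y) (g : Mor Y Z) (h : Mor Z (sh X))
      (f' : Mor X' Y') (g' : Mor Y' Z') (h' : Mor Z' (sh X'))
      (u : Mor X X') (u' : Mor X' X) (v : Mor Y Y') (v' : Mor Y' Y)
      (w : Mor Z Z') (w' : Mor Z' Z),
      comp u' u = idm X -> comp u u' = idm X' ->
      comp v' v = idm Y -> comp v v' = idm Y' ->
      comp w' w = idm Z -> comp w w' = idm Z' ->
      comp f' u = comp v f -> comp g' v = comp w g -> comp h' w = comp (shm u) h ->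
      dist f g h -> dist f' g' h';
  dist_id : forall X, dist (idm X) (0 : Mor X zobj) (0 : Mor zobj (sh X));
  dist_cone : forall X Y (f : Mor X Y),
      exists Z (g : Mor Y Z) (h : Mor Z (sh X)), dist f g h;
  dist_rot : forall X Y Z (f : Mor X Y) (g : Mor Y Z) (h : Mor Z (sh X)),
      dist f g h <-> dist g h (- shm f);
  dist_mor : forall X Y Z X' Y' Z' (f : Mor X Y) (g : Mor Y Z) (h : Mor Z (sh X))
      (f' : Mor X' Y') (g' : Mor Y' Z') (h' : Mor Z' (sh X'))
      (u : Mor X X') (v : Mor Y Y'),
      dist f g h -> dist f' g' h' -> comp v f = comp f' u ->
      exists w : Mor Z Z', comp w g = comp g' v /\ comp h' w = comp (shm u) h;
  dist_oct : forall X Y Z Z' X' Y' (f : Mor X Y) (g : Mor Y Z)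
      (u : Mor Y Z') (u' : Mor Z' (sh X))
      (v : Mor Z X') (v' : Mor X' (sh Y))
      (w : Mor Z Y') (w' : Mor Y' (sh X)),
      dist f u u' -> dist g v v' -> dist (comp g f) w w' ->
      exists (a : Mor Z' Y') (b : Mor Y' X'),
        [/\ dist a b (comp (shm u) v'),
            comp a u = comp w g, comp w' a = u',
            comp b w = v & comp v' b = comp (shm f) w'];
  (* Serre duality with Serre functor [2]: natural isomorphisms
     Hom(E,F) ~= Hom(F,E[2])^* *)
  serre : forall E F, 'Hom(Mor E F, 'Hom(Mor F (sh (sh E)), k^o));
  serre_inj : forall E F, lker (serre E F) = 0%VS;
  serre_surj : forall E F, limg (serre E F) = fullv;
  serre_nat : forall E E' F F' (f : Mor E' E) (g : Mor F F') (u : Mor E F)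
      (v : Mor F' (sh (sh E'))),
      serre E' F' (comp g (comp u f)) v
      = serre E F u (comp (shm (shm f)) (comp v g))
}.

Arguments Mor {k} _ _ _.
Arguments comp {k _ X Y Z} _ _.
Arguments sh {k _} _.
Arguments dist {k _ X Y Z} _ _ _.

Definition shn {k : fieldType} {T : K3Cat k} (n : nat) (X : T) : T := iter n sh X.

(* (E,F)^i = dim Hom(E, F[i]); for negative i = -(n+1) this is
   dim Hom(E[n+1], F) (canonically isomorphic to Hom(E,F[-n-1])). *)
Definition ext {k : fieldType} {T : K3Cat k} (i : int) (E F : T) : nat :=
  match i with
  | Posz n => \dim (fullv : {vspace Mor T E (shn n F)})
  | Negz n => \dim (fullv : {vspace Mor T (shn n.+1 E) F})
  end.

Definition finite_type {k : fieldType} (T : K3Cat k) : Prop :=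
  forall E F : T, exists N : nat, forall i : int, (N < `|i|)%N -> ext i E F = 0%N.

Definition spherical {k : fieldType} {T : K3Cat k} (E : T) : Prop :=
  ext 0 E E = 1%N /\ ext 2 E E = 1%N /\
  forall i : int, i != 0 -> i != 2 -> ext i E E = 0%N.

(* Applying Hom(A, -) to a distinguished triangle X -> Y -> Z -> X[1] gives a
   long exact sequence, so whenever the maps Hom(A, Y[j]) -> Hom(A, Z[j]) for
   j = i - 1, i have a zero source or target, dimensions add:
   (A,X)^i = (A,Z)^(i-1) + (A,Y)^i; Serre duality turns this into the same rule
   in the first variable.  For the triangles E_{n+1} -> E -> E_n[2] this
   computes (E,E_n)^i by induction on n, except in degrees 0 and 1, where b_n
   is a nonzero map between one-dimensional spaces, hence an isomorphism.
   Induction on m with the dual rule then gives (E_m,E_n)^i. *)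

From Pilot Require Import Defs.
From HB Require Import structures.
From mathcomp Require Import all_boot all_order all_algebra zify.
Import GRing.Theory Num.Theory.
Local Open Scope ring_scope.

(* Otherwise [comp] is ssrfun's function composition. *)
Local Notation comp := Defs.comp.

Local Ltac case_ifs :=
  repeat match goal with |- context [if ?c then _ else _] =>
    let Hc := fresh "Hc" in destruct c eqn:Hc end.

Section RankNullity.
Context {k : fieldType} {U V : vectType k}.
Implicit Type F : 'Hom(U, V).

Lemma dim_lker_limg F : (\dim (lker F) + \dim (limg F))%N = \dim {:U}.
Proof. by rewrite -(limg_ker_dim F fullv) capfv. Qed.

Lemma dim_limg_leq_min F : (\dim (limg F) <= minn (\dim {:U}) (\dim {:V}))%N.
Proof.
rewrite leq_min dimvS ?subvf // andbT -(dim_lker_limg F).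
exact: leq_addl.
Qed.

Lemma dim_limg_gt0 F u : F u != 0 -> (0 < \dim (limg F))%N.
Proof.
move=> Fu_neq0; have : (<[F u]> <= limg F)%VS by rewrite -memvE memv_img ?memvf.
by move/dimvS; rewrite dim_vline Fu_neq0.
Qed.

End RankNullity.

Section K3Category.
Context {k : fieldType} {T : K3Cat k}.
Implicit Types X Y Z W A : T.

Definition postcomp {W Y Z} (g : Mor T Y Z) (f : Mor T W Y) : Mor T W Z := comp g f.
Fact postcomp_is_linear W Y Z (g : Mor T Y Z) : linear (@postcomp W Y Z g).
Proof. by move=> a f f'; rewrite /postcomp comp_linr. Qed.
HB.instance Definition _ W Y Z g :=
  GRing.isLinear.Build k (Mor T W Y) (Mor T W Z) *:%R (@postcomp W Y Z g)
    (postcomp_is_linear W Y Z g).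

Definition precomp {X Y Z} (f : Mor T X Y) (g : Mor T Y Z) : Mor T X Z := comp g f.
Fact precomp_is_linear X Y Z (f : Mor T X Y) : linear (@precomp X Y Z f).
Proof. by move=> a g g'; rewrite /precomp comp_linl. Qed.
HB.instance Definition _ X Y Z f :=
  GRing.isLinear.Build k (Mor T Y Z) (Mor T X Z) *:%R (@precomp X Y Z f)
    (precomp_is_linear X Y Z f).

Definition shift {X Y} : Mor T X Y -> Mor T (sh X) (sh Y) := @shm k T X Y.
Fact shift_is_linear X Y : linear (@shift X Y).
Proof. by move=> a f f'; rewrite /shift shm_lin. Qed.
HB.instance Definition _ X Y :=
  GRing.isLinear.Build k (Mor T X Y) (Mor T (sh X) (sh Y)) *:%R (@shift X Y)
    (shift_is_linear X Y).

Lemma compm0 {X Y Z} (g : Mor T Y Z) : comp g (0 : Mor T X Y) = 0.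
Proof. exact: (linear0 (postcomp g)). Qed.

Lemma comp0m {X Y Z} (f : Mor T X Y) : comp (0 : Mor T Y Z) f = 0.
Proof. exact: (linear0 (precomp f)). Qed.

Lemma compmN {X Y Z} (g : Mor T Y Z) (f : Mor T X Y) : comp g (- f) = - comp g f.
Proof. exact: (linearN (postcomp g)). Qed.

Lemma compNm {X Y Z} (g : Mor T Y Z) (f : Mor T X Y) : comp (- g) f = - comp g f.
Proof. exact: (linearN (precomp f)). Qed.

Lemma shm_eq0 {X Y} (f : Mor T X Y) : (shm f == 0) = (f == 0).
Proof. by rewrite -(linear0 (@shift X Y)) (inj_eq (@shm_inj _ _ X Y)). Qed.

Definition hom_map W {Y Z} (g : Mor T Y Z) : 'Hom(Mor T W Y, Mor T W Z) :=
  linfun (postcomp g).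

Lemma hom_mapE W {Y Z} (g : Mor T Y Z) f : hom_map W g f = comp g f.
Proof. by rewrite lfunE. Qed.

Lemma lker_hom_mapN W {Y Z} (g : Mor T Y Z) : lker (hom_map W (- g)) = lker (hom_map W g).
Proof. by apply/vspaceP=> f; rewrite !memv_ker !hom_mapE compNm oppr_eq0. Qed.

Lemma dim_Mor_sh X Y : \dim {:Mor T (sh X) (sh Y)} = \dim {:Mor T X Y}.
Proof.
pose F := linfun (@shift X Y).
have limgF : limg F = fullv.
  apply/eqP; rewrite eqEsubv subvf; apply/subvP=> g _.
  have [f <-] := shm_surj g.
  by apply/memv_imgP; exists f; rewrite ?memvf // lfunE.
have lkerF : lker F = 0%VS by apply/eqP/lker0P=> f f'; rewrite !lfunE; apply: shm_inj.
by rewrite -(dim_lker_limg F) limgF lkerF dimv0.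
Qed.

Lemma dim_Mor_serre X Y : \dim {:Mor T X Y} = \dim {:Mor T Y (sh (sh X))}.
Proof.
rewrite -(dim_lker_limg (serre X Y)) serre_inj serre_surj dimv0 add0n.
by rewrite !dimvf /dim /= muln1.
Qed.

Lemma dim_Mor_shn p q X Y : \dim {:Mor T (shn p X) (shn q Y)} = ext (q%:Z - p%:Z) X Y.
Proof.
have dim_shn r X' Y' : \dim {:Mor T (shn r X') (shn r Y')} = \dim {:Mor T X' Y'}.
  by elim: r => //= r IHr; rewrite dim_Mor_sh.
case: (leqP p q) => [le_pq | lt_qp].
  rewrite -(subnKC le_pq) /shn iterD -/(shn p _) -/(shn _ Y) dim_shn.
  by have -> : (p + (q - p))%N%:Z - p%:Z = Posz (q - p) by lia.
rewrite -(subnKC (ltnW lt_qp)) /shn iterD -/(shn q _) -/(shn _ X) dim_shn.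
have -> : q%:Z - (q + (p - q))%N%:Z = Negz (p - q).-1 by rewrite NegzE; lia.
by rewrite /ext prednK ?subn_gt0.
Qed.

Lemma dim_Mor_shn_sh p q X Y :
  \dim {:Mor T (shn p X) (sh (shn q Y))} = ext (q.+1%:Z - p%:Z) X Y.
Proof. exact: dim_Mor_shn p q.+1 X Y. Qed.

Lemma int_nat_diff (i : int) : exists p q : nat, i = q%:Z - p%:Z.
Proof. by case: i => n; [exists 0%N, n | exists n.+1, 0%N]; rewrite ?NegzE; lia. Qed.

Lemma ext_serre (i j : int) X Y : i + j = 2 -> ext i X Y = ext j Y X.
Proof.
have [p [q ->]] := int_nat_diff i => ij2.
by rewrite -dim_Mor_shn dim_Mor_serre (dim_Mor_shn q p.+2); congr ext; lia.
Qed.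

Lemma ext_shn2r (i : int) X Y : ext i X (shn 2 Y) = ext (i + 2) X Y.
Proof.
have [p [q ->]] := int_nat_diff i.
rewrite -dim_Mor_shn /shn -iterD -/(shn _ Y) dim_Mor_shn.
by congr ext; lia.
Qed.

Lemma ext_shn2l (i : int) X Y : ext i (shn 2 X) Y = ext (i - 2) X Y.
Proof.
rewrite (ext_serre i (2 - i)) ?ext_shn2r; last lia.
by apply: ext_serre; lia.
Qed.

Lemma dist_rotate {X Y Z} {f : Mor T X Y} {g : Mor T Y Z} {h : Mor T Z (sh X)} :
  dist f g h -> dist g h (- shm f).
Proof. exact: (dist_rot f g h).1. Qed.

Lemma dist_comp0 {X Y Z} {f : Mor T X Y} {g : Mor T Y Z} {h : Mor T Z (sh X)} :
  dist f g h -> comp g f = 0.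
Proof.
move=> fgh.
have [w [wg _]] := dist_mor (u := idm X) (v := f) (dist_id X) fgh erefl.
by rewrite -wg compm0.
Qed.

Lemma hom_map_exact W {X Y Z} {f : Mor T X Y} {g : Mor T Y Z} {h : Mor T Z (sh X)} :
  dist f g h -> lker (hom_map W g) = limg (hom_map W f).
Proof.
move=> fgh; apply/eqP; rewrite eqEsubv; apply/andP; split; apply/subvP=> x.
  (* TR3 from the rotated triangle W -> 0 -> W[1] -> W[1], with x as first map *)
  rewrite memv_ker hom_mapE => /eqP gx0.
  have x0 : comp (0 : Mor T (zobj T) Z) (0 : Mor T W (zobj T)) = comp g x.
    by rewrite comp0m gx0.
  have [w [_ fw]] :=
    dist_mor (u := x) (v := 0) (dist_rotate (dist_id W)) (dist_rotate fgh) x0.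
  have [y shy] := shm_surj w.
  rewrite shm_id compmN compm1 compNm -shy -shm_comp in fw.
  move/oppr_inj/shm_inj: fw => fy.
  by apply/memv_imgP; exists y; rewrite ?memvf // hom_mapE.
case/memv_imgP=> y _ ->.
by rewrite memv_ker !hom_mapE Defs.compA (dist_comp0 fgh) comp0m.
Qed.

(* Hom(W,Y) -> Hom(W,Z) -> Hom(W,X[1]) -> Hom(W,Y[1]) -> Hom(W,Z[1]) is exact. *)
Lemma dim_Mor_dist W {X Y Z} {f : Mor T X Y} {g : Mor T Y Z} {h : Mor T Z (sh X)} :
  dist f g h ->
  (\dim {:Mor T W (sh X)} + \dim (limg (hom_map W g)) + \dim (limg (hom_map W (shm g)))
   = \dim {:Mor T W Z} + \dim {:Mor T W (sh Y)})%N.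
Proof.
move=> fgh.
have ghf := dist_rotate fgh; have hfg := dist_rotate ghf.
have fgh_sh := dist_rotate hfg.
have := dim_lker_limg (hom_map W h); rewrite (hom_map_exact W ghf).
have := dim_lker_limg (hom_map W (- shm f)); rewrite (hom_map_exact W hfg).
have := dim_lker_limg (hom_map W (shm g)); rewrite -lker_hom_mapN (hom_map_exact W fgh_sh).
lia.
Qed.

Lemma dist_shn q {X Y Z} {f : Mor T X Y} {g : Mor T Y Z} {h : Mor T Z (sh X)} :
  dist f g h -> exists f' g' h', @dist k T (shn q X) (shn q Y) (shn q Z) f' g' h'.
Proof.
move=> fgh; elim: q => [|q [f' [g' [h' fgh']]]]; first by exists f, g, h.
have fgh1 := dist_rotate (dist_rotate (dist_rotate fgh')).
by exists (- shm f'), (- shm g'), (- shm h').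
Qed.

Lemma ext_dist_addr A i {X Y Z} {f : Mor T X Y} {g : Mor T Y Z} {h : Mor T Z (sh X)} :
  dist f g h ->
  ext (i - 1) A Y = 0%N \/ ext (i - 1) A Z = 0%N ->
  ext i A Y = 0%N \/ ext i A Z = 0%N ->
  ext i A X = (ext (i - 1) A Z + ext i A Y)%N.
Proof.
move=> fgh vanish_pred vanish.
have [p [q Ei]] := int_nat_diff (i - 1).
have [f' [g' [h' fgh']]] := dist_shn q fgh.
have := dim_Mor_dist (shn p A) fgh'.
have := dim_limg_leq_min (hom_map (shn p A) g').
have := dim_limg_leq_min (hom_map (shn p A) (shm g')).
rewrite !dim_Mor_shn_sh !dim_Mor_shn -Ei.
have -> : q.+1%:Z - p%:Z = i by lia.
lia.
Qed.

Lemma ext_dist_addl A i {X Y Z} {f : Mor T X Y} {g : Mor T Y Z} {h : Mor T Z (sh X)} :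
  dist f g h ->
  ext (i + 1) Y A = 0%N \/ ext (i + 1) Z A = 0%N ->
  ext i Y A = 0%N \/ ext i Z A = 0%N ->
  ext i X A = (ext i Y A + ext (i + 1) Z A)%N.
Proof.
move=> fgh vanish_succ vanish.
rewrite (ext_serre i (2 - i)); last lia.
rewrite (ext_dist_addr A (2 - i) fgh).
- by rewrite addnC; congr (_ + _)%N; apply: ext_serre; lia.
- by case: vanish_succ => v; [left | right]; rewrite -v; apply: ext_serre; lia.
- by case: vanish => v; [left | right]; rewrite -v; apply: ext_serre; lia.
Qed.

Lemma ext0_dist_lt {X Y Z} {f : Mor T X Y} {g : Mor T Y Z} {h : Mor T Z (sh X)} :
  dist f g h -> g != 0 -> (ext 0 Y X < ext (-1) Y Z + ext 0 Y Y)%N.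
Proof.
move=> fgh g_neq0.
have := dim_Mor_dist (sh Y) fgh.
have := dim_limg_gt0 (hom_map (sh Y) (shm g)) (idm (sh Y)).
have dimX : \dim {:Mor T (sh Y) (sh X)} = ext 0 Y X := dim_Mor_shn 1 1 Y X.
have dimY : \dim {:Mor T (sh Y) (sh Y)} = ext 0 Y Y := dim_Mor_shn 1 1 Y Y.
have dimZ : \dim {:Mor T (sh Y) Z} = ext (-1) Y Z := dim_Mor_shn 1 0 Y Z.
by rewrite hom_mapE compm1 shm_eq0 g_neq0 dimX dimY dimZ => /(_ isT); lia.
Qed.

Lemma ext1_dist_lt {X Y Z} {f : Mor T X Y} {g : Mor T Y Z} {h : Mor T Z (sh X)} :
  dist f g h -> g != 0 -> (ext 1 Y X < ext 0 Y Z + ext 1 Y Y)%N.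
Proof.
move=> fgh g_neq0.
have := dim_Mor_dist Y fgh.
have := dim_limg_gt0 (hom_map Y g) (idm Y).
by rewrite hom_mapE compm1 g_neq0 => /(_ isT); rewrite /ext /=; lia.
Qed.

End K3Category.

Definition ext_tower (m n : nat) (i : int) : nat :=
  if ((1 - n%:Z <= i) && (i <= m%:Z - n%:Z)) || ((2 <= i) && (i <= m%:Z + 1))
  then 1 else 0.

Lemma spherical_ext {k : fieldType} {T : K3Cat k} (E : T) i :
  spherical E -> ext i E E = ext_tower 1 1 i.
Proof.
case=> ext0 [ext2 ext_other]; rewrite /ext_tower.
have [->|i_neq0] := eqVneq i 0; first by rewrite ext0.
have [->|i_neq2] := eqVneq i 2; first by rewrite ext2.
by rewrite ext_other //; case_ifs; lia.
Qed.

Section SphericalTower.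
Context {k : fieldType} {T : K3Cat k}.
Context {E : T} {En : nat -> T} {a : forall n, Mor T (En n.+1) E}
  {b : forall n, Mor T E (shn 2 (En n))} {c : forall n, Mor T (shn 2 (En n)) (sh (En n.+1))}.
Hypotheses (E_spherical : spherical E) (En1 : En 1%N = E)
  (En_dist : forall n, (0 < n)%N -> b n != 0 /\ dist (a n) (b n) (c n)).

Lemma ext_E_En n i : (0 < n)%N -> ext i E (En n) = ext_tower 1 n i.
Proof.
elim: n i => // n IHn i _.
have [->|n_gt0] := posnP n; first by rewrite En1 spherical_ext.
have [b_neq0 abc] := En_dist n n_gt0.
have ext_E_En2 j : ext j E (shn 2 (En n)) = ext_tower 1 n (j + 2).
  by rewrite ext_shn2r IHn.
(* In degrees 0 and 1 no term next to b_n vanishes; b_n != 0 is used instead. *)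
have [->|i_neq0] := eqVneq i 0.
  have := ext0_dist_lt abc b_neq0.
  rewrite ext_E_En2 spherical_ext // /ext_tower; case_ifs; lia.
have [->|i_neq1] := eqVneq i 1.
  have := ext1_dist_lt abc b_neq0.
  rewrite ext_E_En2 spherical_ext // /ext_tower; case_ifs; lia.
rewrite (ext_dist_addr E i abc) !ext_E_En2 !spherical_ext // /ext_tower;
  case_ifs; lia.
Qed.

Lemma ext_En_En m n i : (0 < m)%N -> (m <= n)%N -> ext i (En m) (En n) = ext_tower m n i.
Proof.
move=> m_gt0 le_mn; have n_gt0 := leq_trans m_gt0 le_mn.
elim: m m_gt0 le_mn i => // m IHm _ lt_mn i.
have [->|m_gt0] := posnP m; first by rewrite En1 ext_E_En.
have [_ abc] := En_dist m m_gt0.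
have ext_En2_En j : ext j (shn 2 (En m)) (En n) = ext_tower m n (j - 2).
  by rewrite ext_shn2l IHm // ltnW.
rewrite (ext_dist_addl (En n) i abc) !ext_En2_En !ext_E_En // /ext_tower;
  case_ifs; lia.
Qed.

End SphericalTower.

Theorem lemma2p12 (k : fieldType) (T : K3Cat k) (E : T) (En : nat -> T)
    (a : forall n : nat, Mor T (En n.+1) E)
    (b : forall n : nat, Mor T E (shn 2 (En n)))
    (c : forall n : nat, Mor T (shn 2 (En n)) (sh (En n.+1))) :
  (2%:R : k) != 0 ->
  finite_type T ->
  spherical E ->
  En 1%N = E ->
  (forall n : nat, (0 < n)%N -> b n != 0 /\ dist (a n) (b n) (c n)) ->
  (forall n : nat, (0 < n)%N -> \dim (fullv : {vspace Mor T E (shn 2 (En n))}) = 1%N) /\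
  (forall (m n : nat) (i : int), (0 < m)%N -> (m <= n)%N ->
     ext i (En m) (En n) =
       (if ((1 - n%:Z <= i) && (i <= m%:Z - n%:Z)) || ((2 <= i) && (i <= m%:Z + 1))
        then 1%N else 0%N)).
Proof.
move=> _ _ E_spherical En1 En_dist; split=> [n n_gt0 | m n i m_gt0 le_mn].
  rewrite -[LHS]/(ext 2 E (En n)) (ext_E_En E_spherical En1 En_dist n 2 n_gt0).
  by rewrite /ext_tower; case_ifs; lia.
by rewrite (ext_En_En E_spherical En1 En_dist).
Qed.
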